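(* Let $R$ be a ring satisfying condition (C): every subring of $Q=Q_{\max}^r(R)$ containing $R$ is flat as a left $R$-module. Let $Q_\alpha$ be the rings of the construction described in the context and $Q^{(\alpha)}$ the rings of Morita's construction starting from $Q$. Then $Q_\alpha=Q^{(\alpha)}$ for every ordinal $\alpha$.
   Context: Rings are associative with unit; modules are right modules. For a hereditary torsion theory with Gabriel filter $\mathcal{E}$ (set of right ideals $I$ with $R/I$ torsion), $R_{\mathcal{E}}=\varinjlim_{I\in\mathcal{E}}\mathrm{Hom}_R(I,R/\mathcal{T}R)$ is its right ring of quotients; for faithful torsion theories it is a subring of $Q_{\max}^r(R)$. For $S\supseteq R$ flat as a left $R$-module, $\tau_S$ is the hereditary torsion theory whose torsion modules are those $M$ with $M\otimes_R S=0$. Construction of $Q_\alpha$: $Q_0=Q_{\max}^r(R)$ (ring of quotients of the Lambek torsion theory, whose filter $\mathcal{E}_0$ is the set of dense right ideals). $\mathcal{E}_{\alpha+1}$ is the Gabriel filter of $\tau_{Q_\alpha}$, namely $\{I: IQ_\alpha=Q_\alpha\}$, and $Q_{\alpha+1}=R_{\mathcal{E}_{\alpha+1}}$. For a limit ordinal $\alpha$, $\mathcal{E}_\alpha=\bigcap_{\beta<\alpha}\mathcal{E}_\beta$ and $Q_\alpha=R_{\mathcal{E}_\alpha}=\bigcap_{\beta<\alpha}Q_\beta$. Morita's construction: for a ring extension $S$ of $R$ and $x\in S$, let $(R:x)=\{r\in R: xr\in R\}$, and $S'=\{s\in S: (R:sr)S=S\text{ for every } r\in R\}$ (a subring of $S$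 containing $R$). Set $Q^{(0)}=Q$, $Q^{(\alpha+1)}=(Q^{(\alpha)})'$, and $Q^{(\alpha)}=\bigcap_{\beta<\alpha}Q^{(\beta)}$ for limit ordinals $\alpha$. *)

(* Q is an abstract ring (the maximal right ring of quotients),
   R is a subring of Q given as a (Prop-valued) subset.  Right modules throughout. *)
From mathcomp Require Import all_boot all_algebra.
Set Implicit Arguments. Unset Strict Implicit. Unset Printing Implicit Defensive.
Import GRing.Theory.
Local Open Scope ring_scope.

Section RingDefs.
Variable Q : pzRingType.

Definition seteq (A B : Q -> Prop) : Prop := forall x, A x <-> B x.

Definition is_subring (S : Q -> Prop) : Prop :=
  [/\ S 0, S 1, (forall x y, S x -> S y -> S (x - y)) &
      (forall x y, S x -> S y -> S (x * y))].

Definition is_right_ideal (R I : Q -> Prop) : Prop :=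
  [/\ (forall x, I x -> R x), I 0, (forall x y, I x -> I y -> I (x - y)) &
      (forall x r, I x -> R r -> I (x * r))].

(* dense right ideals of R (the Gabriel filter E_0 of the Lambek torsion theory) *)
Definition dense_right_ideal (R D : Q -> Prop) : Prop :=
  is_right_ideal R D /\
  forall r1 r2, R r1 -> R r2 -> r1 <> 0 ->
    exists r, [/\ R r, r1 * r <> 0 & D (r2 * r)].

Definition colon (R : Q -> Prop) (x : Q) : Q -> Prop :=
  fun r => R r /\ R (x * r).

Definition right_R_hom (R D : Q -> Prop) (f : Q -> Q) : Prop :=
  [/\ (forall d, D d -> R (f d)),
      (forall d d', D d -> D d' -> f (d + d') = f d + f d') &
      (forall d r, D d -> R r -> f (d * r) = f d * r)].

(* Q = Q_max^r(R) = lim_{D dense} Hom_R(D, R), the identification being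
   q |-> (left multiplication by q on the dense right ideal (R:q)):
   every q is defined on a dense ideal, it is determined by its values on any
   dense ideal, and every homomorphism from a dense ideal to R is realised. *)
Definition is_Qmax (R : Q -> Prop) : Prop :=
  [/\ is_subring R,
      (forall q, dense_right_ideal R (colon R q)),
      (forall q D, dense_right_ideal R D -> (forall d, D d -> q * d = 0) -> q = 0) &
      (forall D f, dense_right_ideal R D -> right_R_hom R D f ->
         exists q, forall d, D d -> q * d = f d)].

Definition prodset (I S : Q -> Prop) : Q -> Prop :=
  fun x => exists n (i s : 'I_n -> Q),
    [/\ (forall k, I (i k)), (forall k, S (s k)) & x = \sum_(k < n) i k * s k].

(* S (a subring of Q containing R, a left R-module by multiplication) is flat
   as a left R-module -- stated by the equational criterion for flatness. *)
Definition flat_left (R S : Q -> Prop) : Prop :=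
  forall n (r s : 'I_n -> Q), (forall k, R (r k)) -> (forall k, S (s k)) ->
    \sum_(k < n) r k * s k = 0 ->
    exists m (a : 'I_n -> 'I_m -> Q) (t : 'I_m -> Q),
      [/\ (forall i j, R (a i j)), (forall j, S (t j)),
          (forall i, s i = \sum_(j < m) a i j * t j) &
          (forall j, \sum_(i < n) r i * a i j = 0)].

Definition condC (R : Q -> Prop) : Prop :=
  forall S, is_subring S -> (forall x, R x -> S x) -> flat_left R S.

(* Gabriel filter of tau_S : { I right ideal | I S = S } *)
Definition tau_filter (R S : Q -> Prop) : (Q -> Prop) -> Prop :=
  fun I => is_right_ideal R I /\ seteq (prodset I S) S.

(* R_E, for a faithful Gabriel filter E, as a subring of Q_max:
   image of lim_{I in E} Hom_R(I, R) in Q *)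
Definition ring_of_quotients (R : Q -> Prop) (E : (Q -> Prop) -> Prop) : Q -> Prop :=
  fun q => exists I, E I /\ forall i, I i -> R (q * i).

Definition morita_prime (R S : Q -> Prop) : Q -> Prop :=
  fun s => S s /\ forall r, R r -> seteq (prodset (colon R (s * r)) S) S.

End RingDefs.

(* Ordinals: indices range over an arbitrary well-ordered type (O, lt). *)
Section Ordinals.
Variables (O : Type) (lt : O -> O -> Prop).

Definition is_wellorder : Prop :=
  [/\ (forall a, ~ lt a a), (forall a b c, lt a b -> lt b c -> lt a c),
      (forall a b, [\/ lt a b, a = b | lt b a]) & well_founded lt].

Definition is_zero (a : O) : Prop := forall b, ~ lt b a.
Definition is_succ_of (b a : O) : Prop :=
  lt b a /\ forall c, lt c a -> c = b \/ lt c b.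
Definition is_limit (a : O) : Prop := ~ is_zero a /\ forall b, ~ is_succ_of b a.

End Ordinals.

Section Families.
Variables (Q : pzRingType) (R : Q -> Prop) (O : Type) (lt : O -> O -> Prop).

Definition Qalpha_family (E : O -> (Q -> Prop) -> Prop) (Qa : O -> Q -> Prop) : Prop :=
  [/\ (forall a, is_zero lt a ->
         (forall I, E a I <-> dense_right_ideal R I) /\
         seteq (Qa a) (ring_of_quotients R (E a))),
      (forall a b, is_succ_of lt b a ->
         (forall I, E a I <-> tau_filter R (Qa b) I) /\
         seteq (Qa a) (ring_of_quotients R (E a))) &
      (forall a, is_limit lt a ->
         (forall I, E a I <-> forall b, lt b a -> E b I) /\
         seteq (Qa a) (ring_of_quotients R (E a)))].

Definition Morita_family (Qm : O -> Q -> Prop) : Prop :=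
  [/\ (forall a, is_zero lt a -> forall x, Qm a x),
      (forall a b, is_succ_of lt b a -> seteq (Qm a) (morita_prime R (Qm b))) &
      (forall a, is_limit lt a -> forall x, Qm a x <-> forall b, lt b a -> Qm b x)].

End Families.

From mathcomp Require Import all_boot all_algebra.
From Stdlib Require Import Classical.
Set Implicit Arguments. Unset Strict Implicit. Unset Printing Implicit Defensive.
Import GRing.Theory.
Local Open Scope ring_scope.

(* By well-founded induction on alpha one shows together that E_alpha is an
   upward closed family of right ideals, that Q^(alpha) is a subring containing
   R, and that Q_alpha = Q^(alpha).  At 0 both rings are Q, because every
   (R : q) is dense; at limits both are intersections.  The successor step is
   Morita's identity R_E = S' for E the Gabriel filter of tau_S, S a flat
   overring of R: E consists of the right ideals I with 1 in IS, and flatness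
   makes E stable under I |-> (I : r) for r in R, which is all that both
   inclusions and the ring structure of R_E require. *)

Section SubsetsOfQ.
Variable Q : pzRingType.
Implicit Types (R S I J : Q -> Prop) (E : (Q -> Prop) -> Prop).

Definition is_overring R S := is_subring S /\ (forall x, R x -> S x).

Definition ideal_upset R E :=
  (forall I, E I -> is_right_ideal R I) /\
  (forall I J, E I -> is_right_ideal R J -> (forall x, I x -> J x) -> E J).

Definition rcolon J I (c : Q) : Q -> Prop := fun x => J x /\ I (c * x).

Lemma subr_closed_sum (P : Q -> Prop) n (F : 'I_n -> Q) :
  P 0 -> (forall x y, P x -> P y -> P (x - y)) -> (forall k, P (F k)) ->
  P (\sum_(k < n) F k).
Proof.
move=> P0 PB PF; apply: big_ind => [//| x y Px Py | k _]; last exact: PF.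
have -> : x + y = x - (0 - y) by rewrite sub0r opprK.
exact: PB _ _ Px (PB _ _ P0 Py).
Qed.

Lemma subringN S x : is_subring S -> S x -> S (- x).
Proof. by case=> S0 _ SB _ Sx; rewrite -sub0r; apply: SB. Qed.

Lemma subring_right_ideal R : is_subring R -> is_right_ideal R R.
Proof. by case. Qed.

Lemma rcolon_right_ideal R J I c :
  is_right_ideal R J -> is_right_ideal R I -> is_right_ideal R (rcolon J I c).
Proof.
case=> JR J0 JB JM [_ I0 IB IM]; split.
- by move=> x [/JR].
- by split; rewrite ?mulr0.
- by move=> x y [Jx Ix] [Jy Iy]; split; [apply: JB | rewrite mulrBr; apply: IB].
- by move=> x r [Jx Ix] Rr; split; [apply: JM | rewrite mulrA; apply: IM].
Qed.

Lemma prodset0 I S : prodset I S 0.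
Proof.
by exists 0%N, (fun _ => 0), (fun _ => 0); split; [case | case | rewrite big_ord0].
Qed.

Lemma prodset_mul I S i s : I i -> S s -> prodset I S (i * s).
Proof. by move=> Ii Ss; exists 1%N, (fun _ => i), (fun _ => s); rewrite big_ord1. Qed.

Lemma prodsetD I S x y : prodset I S x -> prodset I S y -> prodset I S (x + y).
Proof.
move=> [n [i [s [Ii Ss ->]]]] [m [j [t [Ij St ->]]]].
pose join (f : 'I_n -> Q) (g : 'I_m -> Q) k :=
  match split k with inl a => f a | inr b => g b end.
exists (n + m)%N, (join i j), (join s t); split; try by move=> k; rewrite /join; case: split.
rewrite big_split_ord; congr (_ + _); apply: eq_bigr => k _.
- by rewrite /join (unsplitK (inl k)).
- by rewrite /join (unsplitK (inr k)).
Qed.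

Lemma prodset_sum I S n (F : 'I_n -> Q) :
  (forall k, prodset I S (F k)) -> prodset I S (\sum_(k < n) F k).
Proof. by move=> PF; apply: big_ind => //; [apply: prodset0 | apply: prodsetD]. Qed.

Lemma prodsetS I I' S S' x : (forall y, I y -> I' y) -> (forall y, S y -> S' y) ->
  prodset I S x -> prodset I' S' x.
Proof. by move=> II' SS' [n [i [s [Ii Ss ->]]]]; exists n, i, s; split=> // k; auto. Qed.

Lemma prodset_subring I S x :
  is_subring S -> (forall y, I y -> S y) -> prodset I S x -> S x.
Proof.
move=> [S0 _ SB SM] IS [n [i [s [Ii Ss ->]]]].
by apply: subr_closed_sum => // k; apply: SM; auto.
Qed.

Lemma prodset_mulr I S x s : is_subring S -> prodset I S x -> S s -> prodset I S (x * s).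
Proof.
move=> [_ _ _ SM] [n [i [s' [Ii Ss' ->]]]] Ss.
exists n, i, (fun k => s' k * s); split=> //; first by move=> k; apply: SM.
by rewrite mulr_suml; apply: eq_bigr => k _; rewrite mulrA.
Qed.

Lemma prodset_mull I J S c x :
  (forall y, I y -> J (c * y)) -> prodset I S x -> prodset J S (c * x).
Proof.
move=> IJ [n [i [s [Ii Ss ->]]]].
exists n, (fun k => c * i k), s; split=> //; first by move=> k; apply: IJ.
by rewrite mulr_sumr; apply: eq_bigr => k _; rewrite mulrA.
Qed.

Lemma ring_of_quotients_ext R E E' :
  (forall I, E I <-> E' I) -> seteq (ring_of_quotients R E) (ring_of_quotients R E').
Proof. by move=> EE' x; split=> -[I [/EE' EI RxI]]; exists I. Qed.

Lemma ideal_upset_ext R E E' :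
  (forall I, E I <-> E' I) -> ideal_upset R E' -> ideal_upset R E.
Proof.
move=> EE' [E'R E'S]; split=> [I /EE' /E'R // | I J /EE' E'I rJ IJ].
by apply/EE'; apply: E'S E'I rJ IJ.
Qed.

Lemma is_overring_seteq R S S' : seteq S S' -> is_overring R S' -> is_overring R S.
Proof.
move=> SS' [[S0 S1 SB SM] RS]; split; last by move=> x /RS /SS'.
by split; [apply/SS' | apply/SS' | move=> x y /SS' Sx /SS' Sy; apply/SS'; auto ..].
Qed.

Lemma tau_filter_seteq R S S' I :
  seteq S S' -> tau_filter R S I <-> tau_filter R S' I.
Proof.
move=> SS'; have IS x : prodset I S x <-> prodset I S' x.
  by split; apply: prodsetS => // y /SS'.
by split=> -[rI eI]; split=> // x; [rewrite -IS -SS' | rewrite IS SS']; apply: eI.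
Qed.

End SubsetsOfQ.

Section TauFilter.
Variables (Q : pzRingType) (R S : Q -> Prop).
Hypotheses (HR : is_subring R) (RS : is_overring R S).
Implicit Types (I J : Q -> Prop).

Lemma tau_filterP I : tau_filter R S I <-> is_right_ideal R I /\ prodset I S 1.
Proof.
have [[_ S1 _ _] RS'] := RS.
split=> -[rI IS]; split=> //; first exact/IS.
have [IR _ _ _] := rI.
move=> x; split; first by apply: prodset_subring (proj1 RS) _ => y /IR /RS'.
by move=> Sx; rewrite -[x]mul1r; apply: prodset_mulr (proj1 RS) IS Sx.
Qed.

Lemma tau_filter_upset : ideal_upset R (tau_filter R S).
Proof.
split=> [I /tau_filterP [] // | I J /tau_filterP [_ IS] rJ IJ].
by apply/tau_filterP; split=> //; apply: prodsetS IS.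
Qed.

Lemma tau_filter_trans I J : tau_filter R S I -> is_right_ideal R J ->
  (forall x, I x -> tau_filter R S (rcolon R J x)) -> tau_filter R S J.
Proof.
move=> /tau_filterP [_ [n [x [s [Ix Ss E1]]]]] rJ JxS.
apply/tau_filterP; split=> //; rewrite E1; apply: prodset_sum => k.
have /tau_filterP [_ JxS1] := JxS _ (Ix k).
apply: (prodset_mull (I := rcolon R J (x k))) => [y [] // |].
by rewrite -[s k]mul1r; apply: prodset_mulr (proj1 RS) JxS1 (Ss k).
Qed.

Hypothesis flatS : flat_left R S.

Lemma flat_left_cons n (r s : 'I_n -> Q) r0 s0 :
  R r0 -> S s0 -> (forall k, R (r k)) -> (forall k, S (s k)) ->
  r0 * s0 = \sum_(k < n) r k * s k ->
  exists m (a0 : 'I_m -> Q) (a : 'I_n -> 'I_m -> Q) (t : 'I_m -> Q),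
    [/\ (forall j, R (a0 j)), (forall k j, R (a k j)), (forall j, S (t j)),
        s0 = \sum_(j < m) a0 j * t j &
        (forall j, r0 * a0 j = \sum_(k < n) r k * a k j)].
Proof.
move=> Rr0 Ss0 Rr Ss rel.
pose cons (x0 : Q) (x : 'I_n -> Q) (k : 'I_n.+1) :=
  if unlift ord0 k is Some k' then x k' else x0.
have cons0 x0 x : cons x0 x ord0 = x0 by rewrite /cons unlift_none.
have consS x0 x (k : 'I_n) : cons x0 x (lift ord0 k) = x k by rewrite /cons liftK.
have consP (P : Q -> Prop) x0 x : P x0 -> (forall k, P (x k)) -> forall k, P (cons x0 x k).
  by move=> Px0 Px k; rewrite /cons; case: unlift.
have rel0 : \sum_(k < n.+1) cons r0 (fun k => - r k) k * cons s0 s k = 0.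
  rewrite big_ord_recl !cons0.
  under eq_bigr do rewrite !consS mulNr.
  by rewrite sumrN rel subrr.
have [m [a [t [Ra St Es Ez]]]] :=
  flatS (consP _ _ _ Rr0 (fun k => subringN HR (Rr k))) (consP _ _ _ Ss0 Ss) rel0.
exists m, (a ord0), (fun k => a (lift ord0 k)), t; split=> //.
- by rewrite -{1}(cons0 s0 s) Es.
- move=> j; have := Ez j; rewrite big_ord_recl cons0.
  under eq_bigr do rewrite consS mulNr.
  by rewrite sumrN => /eqP; rewrite subr_eq0 => /eqP.
Qed.

(* By flatness the relation [r * 1 = sum_k i_k s_k] yields [1 = sum_j a_j t_j]
   with every [r a_j] in [I]. *)
Lemma tau_filter_rcolon I r : tau_filter R S I -> R r -> tau_filter R S (rcolon R I r).
Proof.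
move=> /tau_filterP [rI IS] Rr; have [IR _ _ _] := rI.
apply/tau_filterP; split; first exact: rcolon_right_ideal (subring_right_ideal HR) rI.
have [[_ S1 _ _] RS'] := RS.
have [n [i [s [Ii Ss Er]]]] : prodset I S r.
  by rewrite -[r]mul1r; apply: prodset_mulr (proj1 RS) IS (RS' _ Rr).
rewrite -[r]mulr1 in Er.
have [m [a0 [a [t [Ra0 Ra St -> ra0]]]]] :=
  flat_left_cons Rr S1 (fun k => IR _ (Ii k)) Ss Er.
exists m, a0, t; split=> // j; split=> //; rewrite ra0.
have [_ I0 IB IM] := rI.
by apply: subr_closed_sum => // k; apply: IM.
Qed.

Lemma tau_filter_rcolon_in J I c : tau_filter R S J -> tau_filter R S I ->
  (forall x, J x -> R (c * x)) -> tau_filter R S (rcolon J I c).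
Proof.
move=> tJ tI cJ; have [upR upS] := tau_filter_upset.
have [_ _ _ JM] := upR _ tJ.
have rJIc := rcolon_right_ideal c (upR _ tJ) (upR _ tI).
apply: (tau_filter_trans tJ rJIc) => x Jx.
apply: upS (tau_filter_rcolon tI (cJ _ Jx)) _ _.
  exact: rcolon_right_ideal (subring_right_ideal HR) rJIc.
by move=> y [Ry Icxy]; split=> //; split; [apply: JM | rewrite mulrA].
Qed.

Lemma ring_of_quotients_tau_overring :
  is_overring R (ring_of_quotients R (tau_filter R S)).
Proof.
have [R0 R1 RB RM] := HR; have [upR _] := tau_filter_upset.
have tR : tau_filter R S R.
  apply/tau_filterP; split; first exact: subring_right_ideal.
  by rewrite -(mulr1 1); apply: prodset_mul => //; case: RS => -[].
have roqR x : R x -> ring_of_quotients R (tau_filter R S) x.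
  by move=> Rx; exists R; split=> // i Ri; apply: RM.
split=> //; split; [exact: roqR | exact: roqR | |].
- move=> x y [I [tI xI]] [J [tJ yJ]]; have [IR _ _ _] := upR _ tI.
  exists (rcolon I J 1); split.
    by apply: tau_filter_rcolon_in => // z Iz; rewrite mul1r; apply: IR.
  by move=> z [Iz Jz]; rewrite mulrBl; apply: RB; [apply: xI | rewrite -[z]mul1r; apply: yJ].
- move=> x y [I [tI xI]] [J [tJ yJ]].
  exists (rcolon J I y); split; first exact: tau_filter_rcolon_in.
  by move=> z [_ Iyz]; rewrite -mulrA; apply: xI.
Qed.

Lemma ring_of_quotients_tau_morita :
  seteq (ring_of_quotients R (tau_filter R S)) (morita_prime R S).
Proof.
have [_ upS] := tau_filter_upset.
have colonR q : is_right_ideal R (colon R q).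
  exact: rcolon_right_ideal q (subring_right_ideal HR) (subring_right_ideal HR).
move=> q; split=> [[I [tI qI]] | [Sq tq]].
- have /tau_filterP [rI IS] := tI; have [IR _ _ _] := rI.
  split.
    rewrite -[q]mulr1; apply: prodset_subring (proj1 RS) _ (prodset_mull qI IS).
    exact: (proj2 RS).
  move=> r Rr; have [] // := upS _ (colon R (q * r)) (tau_filter_rcolon tI Rr) (colonR _).
  by move=> y [Ry Iry]; split=> //; rewrite -mulrA; apply: qI.
- exists (colon R q); split; last by move=> i [].
  by split=> //; have [_ R1 _ _] := HR; have := tq 1 R1; rewrite mulr1.
Qed.

End TauFilter.

Section Intersections.
Variables (Q : pzRingType) (R : Q -> Prop) (B : Type) (P : B -> Prop).

Lemma ideal_upset_bigcap (F : B -> (Q -> Prop) -> Prop) :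
  (exists b, P b) -> (forall b, P b -> ideal_upset R (F b)) ->
  ideal_upset R (fun I => forall b, P b -> F b I).
Proof.
move=> [b0 Pb0] upF; split=> [I FI | I J FI rJ IJ b Pb].
  by have [FR _] := upF _ Pb0; apply: FR (FI _ Pb0).
by have [_ FS] := upF _ Pb; apply: FS (FI _ Pb) rJ IJ.
Qed.

Lemma is_overring_bigcap (S : B -> Q -> Prop) :
  (forall b, P b -> is_overring R (S b)) -> is_overring R (fun x => forall b, P b -> S b x).
Proof.
move=> ovS; split; last by move=> x Rx b /ovS [_]; apply.
split=> [b /ovS [[]] | b /ovS [[]] | x y Sx Sy b Pb | x y Sx Sy b Pb] //.
- by have [[_ _ SB _] _] := ovS _ Pb; apply: SB; auto.
- by have [[_ _ _ SM] _] := ovS _ Pb; apply: SM; auto.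
Qed.

Lemma ring_of_quotients_bigcap (F : B -> (Q -> Prop) -> Prop) :
  is_subring R -> (forall b, P b -> ideal_upset R (F b)) ->
  seteq (ring_of_quotients R (fun I => forall b, P b -> F b I))
        (fun x => forall b, P b -> ring_of_quotients R (F b) x).
Proof.
move=> HR upF x; split=> [[I [FI xI]] b Pb | xF]; first by exists I; auto.
exists (colon R x); split; last by move=> i [].
move=> b Pb; have [[FR FS] [I [FI xI]]] := (upF _ Pb, xF _ Pb).
have [IR _ _ _] := FR _ FI.
apply: FS FI _ _; first exact: rcolon_right_ideal (subring_right_ideal HR) (subring_right_ideal HR).
by move=> i Ii; split; [apply: IR | apply: xI].
Qed.

End Intersections.

Section OrdinalCases.
Variables (O : Type) (lt : O -> O -> Prop).

Lemma ordinal_cases a :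
  [\/ is_zero lt a, exists b, is_succ_of lt b a | is_limit lt a].
Proof.
case: (classic (is_zero lt a)) => [a0 | nz]; first by constructor 1.
case: (classic (exists b, is_succ_of lt b a)) => [sa | ns]; first by constructor 2.
by constructor 3; split=> // b sb; apply: ns; exists b.
Qed.

Lemma limit_has_pred a : is_limit lt a -> exists b, lt b a.
Proof. by case=> nz _; apply: NNPP => nb; apply: nz => b ba; apply: nb; exists b. Qed.

End OrdinalCases.

Section Stages.
Variables (Q : pzRingType) (R : Q -> Prop).
Implicit Types (E : (Q -> Prop) -> Prop) (Qa Qm : Q -> Prop).

Definition stage_agree E Qa Qm := [/\ ideal_upset R E,
  seteq Qa (ring_of_quotients R E), is_overring R Qm & seteq Qa Qm].

Lemma dense_ideal_upset : ideal_upset R (dense_right_ideal R).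
Proof.
split=> [I [] // | I J [rI dI] rJ IJ]; split=> // r1 r2 Rr1 Rr2 r1n0.
by have [r [Rr r1r Ir2r]] := dI r1 r2 Rr1 Rr2 r1n0; exists r; split=> //; apply: IJ.
Qed.

Lemma stage_agree_zero E Qa Qm : is_Qmax R ->
  (forall I, E I <-> dense_right_ideal R I) -> seteq Qa (ring_of_quotients R E) ->
  (forall x, Qm x) -> stage_agree E Qa Qm.
Proof.
move=> [_ colon_dense _ _] EE QaE QmT; split=> //.
- exact: ideal_upset_ext EE dense_ideal_upset.
- move=> x; split=> // _; apply/QaE.
  by exists (colon R x); split; [apply/EE; apply: colon_dense | move=> i []].
Qed.

Lemma stage_agree_succ E Qa Qm Eb Qab Qmb : is_subring R -> condC R ->
  stage_agree Eb Qab Qmb ->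
  (forall I, E I <-> tau_filter R Qab I) -> seteq Qa (ring_of_quotients R E) ->
  seteq Qm (morita_prime R Qmb) -> stage_agree E Qa Qm.
Proof.
move=> HR HC [_ _ ovb ab] EE QaE QmE.
have flatb := HC _ ovb.1 ovb.2.
have EEb I : E I <-> tau_filter R Qmb I := iff_trans (EE I) (tau_filter_seteq _ _ ab).
have QaT := fun x => iff_trans (QaE x) (ring_of_quotients_ext R EEb x).
split=> //.
- exact: ideal_upset_ext EEb (tau_filter_upset ovb).
- apply: is_overring_seteq (ring_of_quotients_tau_overring HR ovb flatb) => x.
  by rewrite QmE (ring_of_quotients_tau_morita HR ovb flatb).
- by move=> x; rewrite QaT QmE (ring_of_quotients_tau_morita HR ovb flatb).
Qed.

Lemma stage_agree_limit B (P : B -> Prop) (F : B -> (Q -> Prop) -> Prop)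
    (Qa' Qm' : B -> Q -> Prop) E Qa Qm :
  is_subring R -> (exists b, P b) ->
  (forall b, P b -> stage_agree (F b) (Qa' b) (Qm' b)) ->
  (forall I, E I <-> forall b, P b -> F b I) -> seteq Qa (ring_of_quotients R E) ->
  (forall x, Qm x <-> forall b, P b -> Qm' b x) -> stage_agree E Qa Qm.
Proof.
move=> HR Pb agree EE QaE QmE.
have upF b : P b -> ideal_upset R (F b) by move=> /agree [].
have ovQm b : P b -> is_overring R (Qm' b) by move=> /agree [].
have QaF x : Qa x <-> forall b, P b -> ring_of_quotients R (F b) x.
  exact: iff_trans (QaE x) (iff_trans (ring_of_quotients_ext R EE x)
                                      (ring_of_quotients_bigcap HR upF x)).
split=> //.
- exact: ideal_upset_ext EE (ideal_upset_bigcap Pb upF).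
- exact: is_overring_seteq QmE (is_overring_bigcap ovQm).
- move=> x; rewrite QaF QmE; split=> Hx b Pb'; have [_ Qab _ ab] := agree b Pb'.
  + by apply/ab/Qab; apply: Hx.
  + by apply/Qab/ab; apply: Hx.
Qed.

End Stages.

Theorem proposition3p3 (Q : pzRingType) (R : Q -> Prop) :
  is_Qmax R -> condC R ->
  forall (O : Type) (lt : O -> O -> Prop), is_wellorder lt ->
  forall (E : O -> (Q -> Prop) -> Prop) (Qa Qm : O -> Q -> Prop),
    Qalpha_family R lt E Qa -> Morita_family R lt Qm ->
    forall a : O, seteq (Qa a) (Qm a).
Proof.
move=> Qmax HC O lt [_ _ _ wf] E Qa Qm [EQ0 EQS EQL] [MQ0 MQS MQL] a.
have HR : is_subring R by case: Qmax.
suff /(_ a) [] : forall a, stage_agree R (E a) (Qa a) (Qm a) by [].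
elim/(well_founded_induction wf) => {}a IH.
have [a0 | [b ba] | la] := ordinal_cases lt a.
- have [EE QaE] := EQ0 a a0; exact: stage_agree_zero Qmax EE QaE (MQ0 a a0).
- have [EE QaE] := EQS a b ba; exact: stage_agree_succ HR HC (IH b ba.1) EE QaE (MQS a b ba).
- have [EE QaE] := EQL a la; exact: stage_agree_limit HR (limit_has_pred la) IH EE QaE (MQL a la).
Qed.
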